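(* Let $(R,\mathcal{T})$ and $(S,\widetilde{\mathcal{T}})$ be transverse CEERs on a compact, metrizable, zero-dimensional space $X$, and give $R\vee S$ the étale topology transferred from $R\times_XS$ via $((x,y),(y,z))\mapsto(x,z)$. Then: (i) if $(x,y)\in R$, then $\#([x]_S)=\#([y]_S)$; (ii) if $\mathcal{O}'$ is a groupoid partition of $R\vee S$ finer than the clopen partition $\{\Delta,\,R\setminus\Delta,\,S\setminus\Delta,\,(R\vee S)\setminus(R\cup S)\}$ (where $\Delta=\Delta_X$), then for every $U\in\mathcal{O}'$ there are unique elements $U_R,U_S,V_R,V_S\in\mathcal{O}'$ with $U_R,V_R\subset R$, $U_S,V_S\subset S$ and $U=U_R\cdot U_S=V_S\cdot V_R$; moreover $\mathcal{O}'\cap R=\{U\in\mathcal{O}':U\subset R\}$ and $\mathcal{O}'\cap S$ are groupoid partitions of $R$ and $S$, respectively.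
   Context: An étale equivalence relation on $X$ is a countable equivalence relation $R\subset X\times X$ with a locally compact, Hausdorff, second countable topology in which the product of composable pairs is continuous, the inverse is a homeomorphism, and $r(x,y)=x$ is a local homeomorphism; a CEER is a compact étale equivalence relation. $[x]_S$ is the $S$-class of $x$. $R\times_XS=\{((x,y),(y,z)):(x,y)\in R,(y,z)\in S\}$ with the relative product topology; $R$ and $S$ are transverse if $R\cap S=\Delta_X$ and there is a homeomorphism $h:R\times_XS\to S\times_XR$ with $r\circ h=r$, $s\circ h=s$ (where $r((x,y),(y,z))=x$, $s((x,y),(y,z))=z$); then $((x,y),(y,z))\mapsto(x,z)$ is a bijection onto the equivalence relation $R\vee S$ generated by $R$ and $S$. For subsets $U,V$ of an equivalence relation, $U\cdot V=\{(x,z):(x,y)\in U,(y,z)\in V\text{ for some }y\}$ and $U^{-1}=\{(y,x):(x,y)\in U\}$. A groupoid partition of a CEER $R$ is a finite clopen partition $\mathcal{O}'$ of $R$ such that: $\mathcal{O}'$ is finer than $\{\Delta,R\setminus\Delta\}$; for each $U\in\mathcal{O}'$ the maps $r,s$ restricted to $U$ are homeomorphisms onto their images, and if $U\subset R\setminus\Delta$ then $r(U)\cap s(U)=\emptyset$; for all $U,V\in\mathcal{O}'$ either $U\cdot V=\emptyset$ or $U\cdot V\in\mathcal{O}'$; and $U^{-1}\in\mathcal{O}'$ for every $U\in\mathcal{O}'$. *)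

From HB Require Import structures.
From mathcomp Require Import all_boot all_order all_algebra.
From mathcomp Require Import all_classical all_reals all_analysis.
Set Implicit Arguments. Unset Strict Implicit. Unset Printing Implicit Defensive.
Import Order.TTheory GRing.Theory Num.Theory.
Local Open Scope classical_set_scope.
Local Open Scope ring_scope.

Definition metrizable (X : topologicalType) : Prop :=
  exists (K : realType) (d : X -> X -> K),
    [/\ (forall x y, d x y = 0 <-> x = y),
        (forall x y, d x y = d y x),
        (forall x y z, d x z <= d x y + d y z) &
        (forall A : set X, open A <->
           (forall x, A x -> exists2 e : K, 0 < e & [set y | d x y < e] `<=` A))].

Definition zero_dim (X : topologicalType) : Prop :=
  forall (A : set X) (x : X), open A -> A x ->
    exists B : set X, [/\ clopen B, B x & B `<=` A].

Definition diag (X : Type) : set (X * X) := [set p | p.1 = p.2].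
Arguments diag X : clear implicits.

Definition rcomp (X : Type) (U V : set (X * X)) : set (X * X) :=
  [set p | exists y, U (p.1, y) /\ V (y, p.2)].
Definition rinv (X : Type) (U : set (X * X)) : set (X * X) :=
  [set p | U (p.2, p.1)].

Definition eqrel_on (X : Type) (E : set (X * X)) : Prop :=
  [/\ (forall x, E (x, x)),
      (forall x y, E (x, y) -> E (y, x)) &
      (forall x y z, E (x, y) -> E (y, z) -> E (x, z))].

Definition gen_eqrel (X : Type) (A : set (X * X)) : set (X * X) :=
  [set p | forall E : set (X * X), eqrel_on E -> A `<=` E -> E p].

Definition eqclass (X : Type) (E : set (X * X)) (x : X) : set X :=
  [set y | E (x, y)].

Definition rel_open (T : topologicalType) (A P : set T) : Prop :=
  exists O : set T, open O /\ P = O `&` A.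

Definition rel_clopen (T : topologicalType) (A P : set T) : Prop :=
  [/\ P `<=` A, rel_open A P & rel_open A (A `\` P)].

Definition homeo_onto_image (T T' : topologicalType) (A : set T) (f : T -> T')
  : Prop :=
  [/\ {in A &, injective f}, {within A, continuous f} &
      (forall V, V `<=` A -> rel_open A V -> rel_open (f @` A) (f @` V))].

Definition local_homeo (T T' : topologicalType) (f : T -> T') : Prop :=
  forall g : T, exists U : set T,
    [/\ open U, U g, {in U &, injective f}, {within U, continuous f} &
        forall V, open V -> V `<=` U -> open (f @` V)].

(* A relation R on X with a topology is encoded by a topological space G
   together with an injection iota : G -> X * X whose image is R; the
   topology of R is the one transported from G. *)

Definition composable (X : Type) (G : Type) (iota : G -> X * X) : set (G * G) :=
  [set p | (iota p.1).2 = (iota p.2).1].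

Definition etale_eqrel (X G : topologicalType) (iota : G -> X * X) : Prop :=
  [/\ injective iota,
      eqrel_on (range iota) /\ (forall x, countable (eqclass (range iota) x)),
      locally_compact [set: G] /\ hausdorff_space G /\ @second_countable G,
      (exists mul : G -> G -> G,
         (forall a b, (iota a).2 = (iota b).1 ->
            iota (mul a b) = ((iota a).1, (iota b).2)) /\
         {within composable iota, continuous (fun p : G * G => mul p.1 p.2)}) /\
      (exists inv : G -> G,
         (forall a, iota (inv a) = ((iota a).2, (iota a).1)) /\
         continuous inv /\ cancel inv inv) &
      local_homeo (fun g => (iota g).1)].

Definition CEER (X G : topologicalType) (iota : G -> X * X) : Prop :=
  etale_eqrel iota /\ compact [set: G].

Section Fibered.
Context {X GR GS : topologicalType} (iR : GR -> X * X) (iS : GS -> X * X).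

(* R x_X S as a subset of GR * GS (relative product topology) *)
Definition fibprod : set (GR * GS) := [set p | (iR p.1).2 = (iS p.2).1].
Definition fr (p : GR * GS) : X := (iR p.1).1.
Definition fs (p : GR * GS) : X := (iS p.2).2.
Definition fibmul (p : GR * GS) : X * X := (fr p, fs p).
End Fibered.

Definition transverse (X GR GS : topologicalType)
  (iR : GR -> X * X) (iS : GS -> X * X) : Prop :=
  range iR `&` range iS = diag X /\
  exists (h : GR * GS -> GS * GR) (k : GS * GR -> GR * GS),
    [/\ (forall p, fibprod iR iS p -> fibprod iS iR (h p)),
        (forall q, fibprod iS iR q -> fibprod iR iS (k q)),
        (forall p, fibprod iR iS p -> k (h p) = p) /\
        (forall q, fibprod iS iR q -> h (k q) = q),
        ({within fibprod iR iS, continuous h} /\ {within fibprod iS iR, continuous k}) &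
        (forall p, fibprod iR iS p ->
           fr iS (h p) = fr iR p /\ fs iR (h p) = fs iS p)].

(* E is the equivalence relation; its topology is transported from the
   subspace D of G via iota (iota is a bijection from D onto E). *)
Definition groupoid_partition (X G : topologicalType) (E : set (X * X))
  (iota : G -> X * X) (D : set G) (O : set (set (X * X))) : Prop :=
  [/\
      finite_set O /\ (forall U, O U -> U !=set0) /\
      (forall U V, O U -> O V -> U `&` V !=set0 -> U = V) /\
      \bigcup_(U in O) U = E,
      (forall U, O U -> rel_clopen D (D `&` iota @^-1` U)),
      (forall U, O U -> U `<=` diag X \/ U `<=` E `\` diag X),
      (forall U, O U ->
         homeo_onto_image (D `&` iota @^-1` U) (fun g => (iota g).1) /\
         homeo_onto_image (D `&` iota @^-1` U) (fun g => (iota g).2)) /\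
      (forall U, O U -> U `<=` E `\` diag X ->
         (fst @` U) `&` (snd @` U) = set0) &
      (forall U V, O U -> O V -> rcomp U V = set0 \/ O (rcomp U V)) /\
      (forall U, O U -> O (rinv U))].

(* Transversality makes R and S commute as relations (R.S = S.R), so R v S = R.S and, since
   R and S meet only in the diagonal, every pair of R v S factors through a UNIQUE middle point.
   Uniqueness of middle points gives injections between S-classes of R-related points (hence (i)
   by Cantor-Bernstein) and the unique factorization U = U_R . U_S of the blocks of a groupoid
   partition.  The blocks contained in R form a groupoid partition of R because R embeds into the
   fibred product R x_X S as g |-> (g, unit at the target of g), continuously and with the first
   projection as retraction, so clopenness and the homeomorphism properties transfer; likewise
   for S. *)

From HB Require Import structures.
From mathcomp Require Import all_boot all_order all_algebra.
From mathcomp Require Import all_classical all_reals all_analysis.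
Set Implicit Arguments. Unset Strict Implicit. Unset Printing Implicit Defensive.
Local Open Scope classical_set_scope.

Section Relations.
Context {X : Type}.
Implicit Types (A B E : set (X * X)) (O : set (set (X * X))).

Definition partition_respects O A := forall W p, O W -> W p -> A p -> W `<=` A.

Lemma sub_gen_eqrel A : A `<=` gen_eqrel A.
Proof. by move=> p Ap E _; apply. Qed.

Lemma gen_eqrelU_rcomp A B : eqrel_on A -> eqrel_on B ->
  rcomp B A `<=` rcomp A B -> gen_eqrel (A `|` B) = rcomp A B.
Proof.
move=> [rA sA tA] [rB sB tB] BA; apply/seteqP; split => [p|[x z] [y /= [Axy Byz]]].
  apply; last by move=> [x y] /= [Axy|Bxy]; [exists y | exists x].
  split => [x|x y [z /= [Axz Bzy]]|x y z [u /= [Axu Buy]] [v /= [Ayv Bvz]]].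
  - by exists x.
  - by apply: BA; exists z; split; [apply: sB | apply: sA].
  - have [w /= [Auw Bwv]] := BA (u, v) (ex_intro _ y (conj Buy Ayv)).
    by exists w; split; [apply: tA Axu Auw | apply: tB Bwv Bvz].
by move=> E [_ _ tE] AB; apply: (tE _ y); apply: AB; [left | right].
Qed.

Lemma rcomp_mid_uniq A B : eqrel_on A -> eqrel_on B -> A `&` B = diag X ->
  forall x y y' z, A (x, y) -> B (y, z) -> A (x, y') -> B (y', z) -> y = y'.
Proof.
move=> [_ sA tA] [_ sB tB] AB x y y' z Axy Byz Axy' By'z.
have : (A `&` B) (y, y') by split; [apply: tA (sA _ _ Axy) Axy' | apply: tB Byz (sB _ _ By'z)].
by rewrite AB.
Qed.

Lemma eqclass_card_le A B a b : eqrel_on A -> eqrel_on B -> A `&` B = diag X ->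
  rcomp A B `<=` rcomp B A -> A (a, b) -> (eqclass B b #<= eqclass B a)%card.
Proof.
move=> eA eB AB ABBA Aab.
have fP z : exists w, B (b, z) -> B (a, w) /\ A (w, z).
  have [Bbz|nBbz] := pselect (B (b, z)); last by exists z => /nBbz.
  by have [w ?] := ABBA (a, z) (ex_intro _ b (conj Aab Bbz)); exists w => _.
have [f hf] := choice fP.
have f_inj : {in eqclass B b &, injective f}.
  move=> z z' /set_mem Bbz /set_mem Bbz' fzz'.
  have [_ Afz] := hf z Bbz; have [_ Afz'] := hf z' Bbz'.
  rewrite fzz' in Afz; case: (eB) => _ sB _.
  exact: (rcomp_mid_uniq eA eB AB Afz (sB _ _ Bbz) Afz' (sB _ _ Bbz')).
rewrite -(card_le_eql (inj_card_eq f_inj)).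
by apply: subset_card_le => _ [z Bbz <-]; case: (hf z Bbz).
Qed.
End Relations.

Lemma partition_respects_finer (X : topologicalType) (E A B : set (X * X))
    (O : set (set (X * X))) :
  eqrel_on A -> eqrel_on B -> A `&` B = diag X ->
  (forall U, O U -> U `<=` diag X \/ U `<=` A `\` diag X \/
     U `<=` B `\` diag X \/ U `<=` E `\` (A `|` B)) ->
  partition_respects O A /\ partition_respects O B.
Proof.
move=> [rA _ _] [rB _ _] AB finer.
have diagAB p : A p -> B p -> diag X p by rewrite -AB.
split=> W p OW Wp Cp q Wq.
- case: (finer W OW) => [Wd|[WA|[WB|WE]]].
  + by case: q Wq => x y /Wd; rewrite /diag /= => ->; apply: rA.
  + by case: (WA q Wq).
  + by case: (WB p Wp) => Bp []; apply: diagAB.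
  + by case: (WE p Wp) => _ []; left.
- case: (finer W OW) => [Wd|[WA|[WB|WE]]].
  + by case: q Wq => x y /Wd; rewrite /diag /= => ->; apply: rB.
  + by case: (WA p Wp) => Ap []; apply: diagAB.
  + by case: (WB q Wq).
  + by case: (WE p Wp) => _ []; right.
Qed.

Lemma groupoid_partition_rcomp_factor (X G : topologicalType) (A B : set (X * X))
    (mu : G -> X * X) (D : set G) (O : set (set (X * X))) :
  eqrel_on A -> eqrel_on B -> A `&` B = diag X -> rcomp B A `<=` rcomp A B ->
  groupoid_partition (gen_eqrel (A `|` B)) mu D O ->
  partition_respects O A -> partition_respects O B ->
  forall U, O U ->
    exists UA UB,
      [/\ O UA, O UB, UA `<=` A, UB `<=` B & U = rcomp UA UB] /\
      forall UA' UB',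
        [/\ O UA', O UB', UA' `<=` A, UB' `<=` B & U = rcomp UA' UB'] ->
        UA' = UA /\ UB' = UB.
Proof.
move=> eA eB AB BA [[_ [ne [dis cov]]] _ _ _ [cl _]] OA OB U OU.
have EAB := gen_eqrelU_rcomp eA eB BA.
have inO p : gen_eqrel (A `|` B) p -> exists2 W, O W & W p.
  by rewrite -cov => -[W OW Wp]; exists W.
have [[x z] Uxz] := ne U OU.
have [y /= [Axy Byz]] : rcomp A B (x, z) by rewrite -EAB -cov; exists U.
have [UA OUA UAxy] := inO (x, y) (sub_gen_eqrel (or_introl Axy)).
have [UB OUB UByz] := inO (y, z) (sub_gen_eqrel (or_intror Byz)).
have UAB : rcomp UA UB (x, z) by exists y.
have U_eq : U = rcomp UA UB.
  case: (cl _ _ OUA OUB) => [UAB0|OUAB]; first by move: UAB; rewrite UAB0.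
  by apply: dis => //; exists (x, z).
exists UA, UB; split; first by split => //; [apply: OA OUA UAxy Axy | apply: OB OUB UByz Byz].
move=> UA' UB' [OUA' OUB' UA'A UB'B U_eq'].
have [y' /= [UA'xy' UB'y'z]] : rcomp UA' UB' (x, z) by rewrite -U_eq'.
have yy' := rcomp_mid_uniq eA eB AB Axy Byz (UA'A _ UA'xy') (UB'B _ UB'y'z).
by subst y'; split; apply: dis => //; [exists (x, y) | exists (y, z)].
Qed.

Section EtaleMaps.
Context {X G : topologicalType} (iota : G -> X * X).
Hypothesis etale : etale_eqrel iota.

Lemma etale_src_continuous : continuous (fun g => (iota g).1).
Proof.
case: etale => _ _ _ _ lh g; have [U [oU Ug _ + _]] := lh g.
by rewrite continuous_open_subspace // => cU; exact: cU (mem_set Ug).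
Qed.

Lemma etale_tgt_continuous : continuous (fun g => (iota g).2).
Proof.
case: (etale) => _ _ _ [_ [inv [iotaV [cinv _]]]] _.
have -> : (fun g => (iota g).2) = (fun g => (iota g).1) \o inv.
  by apply: funext => g /=; rewrite iotaV.
by move=> g; apply: continuous_comp; [exact: cinv | exact: etale_src_continuous].
Qed.
End EtaleMaps.

Lemma continuous_local_homeo_section (T U : topologicalType) (r : T -> U) (u : U -> T) :
  local_homeo r -> cancel u r -> continuous (u \o r) -> continuous u.
Proof.
move=> lh uK cur x N /= Nux.
have [W [oW Wux _ _ openr]] := lh (u x).
have : nbhs (u x) ((u \o r) @^-1` N) by apply: cur; rewrite /= uK.
rewrite nbhsE => -[M [oM Mux] MN].
have : nbhs x (r @` (M `&` W)).
  apply: open_nbhs_nbhs; split; first by apply: openr; [exact: openI | exact: subIsetr].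
  by exists (u x); rewrite ?uK.
by apply: filterS => _ [v [Mv _] <-]; exact: MN.
Qed.

Lemma etale_unit_continuous (X G : topologicalType) (iota : G -> X * X) :
  etale_eqrel iota -> exists u : X -> G, continuous u /\ forall x, iota (u x) = (x, x).
Proof.
move=> etale; have src_cont := etale_src_continuous etale.
case: (etale) => iota_inj [[refl _ _] _] _ [[mul [iotaM mul_cont]] [inv [iotaV [inv_cont _]]]] lh.
have unitP x : exists g, iota g = (x, x) by have [g _ <-] := refl x; exists g.
have [u iotau] := choice unitP.
exists u; split => //; apply: (continuous_local_homeo_section lh).
  by move=> x; rewrite iotau.
have -> : u \o (fun g => (iota g).1) = fun g => mul g (inv g).
  by apply: funext => g; apply: iota_inj; rewrite /= iotaM ?iotaV //= iotau.
move=> g; have gVg : composable iota (g, inv g) by rewrite /composable /= iotaV.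
have pair_cvg : (fun h => (h, inv h)) @ nbhs g --> within (composable iota) (nbhs (g, inv g)).
  have gVg_cvg : (fun h => (h, inv h)) @ nbhs g --> (g, inv g).
    by apply: cvg_pair => //; exact: inv_cont.
  move=> P /gVg_cvg; apply: (@filterS _ (nbhs g)) => h; apply.
  by rewrite /composable /= iotaV.
exact: (cvg_comp _ _ pair_cvg ((subspace_continuousP _ _).1 mul_cont _ gVg)).
Qed.

Section Transfer.
Context {X Gf G : topologicalType} (D : set Gf) (mu : Gf -> X * X)
  (iota : G -> X * X) (phi : G -> Gf) (psi : Gf -> G) (U : set (X * X)).
Hypotheses (phi_cont : continuous phi) (psi_cont : continuous psi)
  (D_phi : forall g, D (phi g)) (phiK : cancel phi psi)
  (mu_phi : forall g, mu (phi g) = iota g)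
  (psiK : forall p, D p -> U (mu p) -> phi (psi p) = p).

Let A' := D `&` mu @^-1` U.
Let A := [set: G] `&` iota @^-1` U.

Lemma phi_in_block g : A' (phi g) <-> U (iota g).
Proof. by rewrite /A' /= mu_phi; split => [[]|] //. Qed.

Lemma rel_clopen_transfer : rel_clopen D A' -> rel_clopen [set: G] A.
Proof.
move=> [] _ [Q1 [oQ1 e1]] [Q2 [oQ2 e2]]; split => //.
- exists (phi @^-1` Q1); split; first exact: (continuousP phi).1 phi_cont _ oQ1.
  apply/seteqP; split => g /=.
    by move=> [_ Ug]; have := (phi_in_block g).2 Ug; rewrite e1 => -[].
  by move=> [Q1g _]; split => //; apply/(phi_in_block g); rewrite e1.
- exists (phi @^-1` Q2); split; first exact: (continuousP phi).1 phi_cont _ oQ2.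
  apply/seteqP; split => g /=.
    move=> [_ nA]; have : (D `\` A') (phi g) by split => // /(phi_in_block g) Ug; apply: nA.
    by rewrite e2 => -[].
  move=> [Q2g _]; split => // -[_ Ug].
  have : (Q2 `&` D) (phi g) by [].
  by rewrite -e2 => -[_]; apply; apply/(phi_in_block g).
Qed.

Lemma image_transfer (f : X * X -> X) (O : set G) :
  (fun p => f (mu p)) @` (psi @^-1` O `&` A') = (fun g => f (iota g)) @` (O `&` A).
Proof.
apply/seteqP; split => y.
  move=> [p [Op [Dp Up]] <-]; exists (psi p); last by rewrite -mu_phi psiK.
  by split => //; split => //=; rewrite -mu_phi psiK.
move=> [g [Og [_ Ug]] <-]; exists (phi g); last by rewrite mu_phi.
by split; [rewrite /= phiK | apply/phi_in_block].
Qed.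

Lemma homeo_onto_image_transfer (f : X * X -> X) :
  continuous (fun g => f (iota g)) ->
  homeo_onto_image A' (fun p => f (mu p)) -> homeo_onto_image A (fun g => f (iota g)).
Proof.
move=> f_cont [f_inj _ f_open]; split.
- move=> g g' /set_mem [_ Ug] /set_mem [_ Ug'] fgg'.
  rewrite -(phiK g) -(phiK g'); congr psi.
  by apply: f_inj; rewrite ?inE ?mu_phi //; apply/phi_in_block.
- exact: continuous_subspaceT.
- move=> V VA [Q [oQ ->]].
  have := f_open (psi @^-1` Q `&` A') (@subIsetr _ _ _) _.
  have -> : (fun p => f (mu p)) @` A' = (fun g => f (iota g)) @` A.
    by rewrite -[A']setTI -[A in RHS]setTI -image_transfer.
  rewrite image_transfer; apply.
  by exists (psi @^-1` Q); split => //; exact: (continuousP psi).1 psi_cont _ oQ.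
Qed.
End Transfer.

Lemma groupoid_partition_restrict (X Gf G : topologicalType) (D : set Gf)
    (mu : Gf -> X * X) (E A : set (X * X)) (iota : G -> X * X)
    (phi : G -> Gf) (psi : Gf -> G) (O : set (set (X * X))) :
  groupoid_partition E mu D O -> eqrel_on A -> A `<=` E -> partition_respects O A ->
  continuous phi -> continuous psi -> (forall g, D (phi g)) -> cancel phi psi ->
  (forall g, mu (phi g) = iota g) -> (forall p, D p -> A (mu p) -> phi (psi p) = p) ->
  continuous (fun g => (iota g).1) -> continuous (fun g => (iota g).2) ->
  groupoid_partition A iota [set: G] [set U | O U /\ U `<=` A].
Proof.
move=> [[fin [ne [dis cov]]] clo finer [homeo disj] [cl inv]] [_ sA tA] AE OA
  phi_cont psi_cont D_phi phiK mu_phi psiK src_cont tgt_cont.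
split.
- split; first by apply: sub_finite_set fin => U [].
  split; first by move=> U [OU _]; exact: ne.
  split; first by move=> U V [OU _] [OV _]; exact: dis.
  apply/seteqP; split => [p [U [_ UA] Up]|p Ap]; first exact: UA.
  have : E p by apply: AE.
  by rewrite -cov => -[W OW Wp]; exists W => //; split => //; exact: OA Wp Ap.
- by move=> U [OU _]; apply: rel_clopen_transfer phi_cont D_phi mu_phi _; exact: clo.
- move=> U [OU UA]; case: (finer U OU) => [|UE]; first by left.
  by right => q Uq; split; [exact: UA | exact: (UE q Uq).2].
- split.
  + move=> U [OU UA]; have [src_homeo tgt_homeo] := homeo U OU.
    have psiK' p : D p -> U (mu p) -> phi (psi p) = p by move=> Dp /UA; exact: psiK.
    have transfer := homeo_onto_image_transfer psi_cont D_phi phiK mu_phi psiK'.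
    by split; [exact: transfer src_cont src_homeo | exact: transfer tgt_cont tgt_homeo].
  + move=> U [OU UA] UAd; apply: disj => // q Uq.
    by have [Aq nd] := UAd q Uq; split; [exact: AE | exact: nd].
- split.
  + move=> U V [OU UA] [OV VA]; case: (cl U V OU OV) => [->|OUV]; first by left.
    right; split => // -[x z] [y /= [Uxy Vyz]].
    exact: tA (UA _ Uxy) (VA _ Vyz).
  + move=> U [OU UA]; split; first exact: inv.
    by move=> [x y] /= Uyx; apply: sA; exact: UA _ Uyx.
Qed.

Section Transverse.
Context {X GR GS : topologicalType} (iR : GR -> X * X) (iS : GS -> X * X).

Lemma transverse_rcompC : transverse iR iS ->
  rcomp (range iR) (range iS) = rcomp (range iS) (range iR).
Proof.
move=> [_ [h [k [hP kP [_ kK] _ hrs]]]].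
apply/seteqP; split => -[x z] [y /= [[a _ ea] [b _ eb]]].
- have ab : fibprod iR iS (a, b) by rewrite /fibprod /= ea eb.
  have := hP _ ab; have [] := hrs _ ab.
  rewrite /fibprod /fr /fs /= ea eb /= => e1 e2 e3.
  exists (iS (h (a, b)).1).2; split.
    by exists (h (a, b)).1 => //; rewrite [LHS]surjective_pairing e1.
  by exists (h (a, b)).2 => //; rewrite [LHS]surjective_pairing e2 e3.
- have ab : fibprod iS iR (a, b) by rewrite /fibprod /= ea eb.
  have kab := kP _ ab; have [] := hrs _ kab.
  rewrite kK // /fr /fs /= ea eb /= => e1 e2.
  exists (iR (k (a, b)).1).2; split.
    by exists (k (a, b)).1 => //; rewrite [LHS]surjective_pairing e1.
  by exists (k (a, b)).2 => //; rewrite [LHS]surjective_pairing e2 kab.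
Qed.

Variable O : set (set (X * X)).
Hypotheses (etaleR : etale_eqrel iR) (etaleS : etale_eqrel iS)
  (RS : range iR `&` range iS = diag X)
  (part : groupoid_partition (gen_eqrel (range iR `|` range iS))
            (fibmul iR iS) (fibprod iR iS) O).

Let eR : eqrel_on (range iR). Proof. by case: etaleR => _ []. Qed.
Let eS : eqrel_on (range iS). Proof. by case: etaleS => _ []. Qed.

Lemma groupoid_partition_restrictR : partition_respects O (range iR) ->
  groupoid_partition (range iR) iR [set: GR] [set U | O U /\ U `<=` range iR].
Proof.
have [uS [uS_cont iSu]] := etale_unit_continuous etaleS.
have [iS_inj [[rS _ _] _] _ _ _] := etaleS.
move=> OR; apply: (groupoid_partition_restrict (phi := fun g => (g, uS (iR g).2))
  (psi := fst) part eR (fun p Rp => sub_gen_eqrel (or_introl Rp)) OR).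
- move=> g; apply: cvg_pair => //.
  have tgt_cont : {for g, continuous (fun g => (iR g).2)} by exact: etale_tgt_continuous.
  exact: continuous_comp tgt_cont (uS_cont _).
- by move=> p; exact: cvg_fst.
- by move=> g; rewrite /fibprod /= iSu.
- by [].
- by move=> g; rewrite /fibmul /fr /fs /= iSu -surjective_pairing.
- move=> [g s]; rewrite /fibprod /fibmul /fr /fs /= => gs Rxz; congr pair.
  have Rxy : range iR ((iR g).1, (iR g).2) by exists g => //; rewrite -surjective_pairing.
  have Syz : range iS ((iS s).1, (iS s).2) by exists s => //; rewrite -surjective_pairing.
  rewrite -gs in Syz.
  have yz := rcomp_mid_uniq eR eS RS Rxy Syz Rxz (rS _).
  by apply: iS_inj; rewrite iSu [RHS]surjective_pairing -gs -yz.
- exact: etale_src_continuous.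
- exact: etale_tgt_continuous.
Qed.

Lemma groupoid_partition_restrictS : partition_respects O (range iS) ->
  groupoid_partition (range iS) iS [set: GS] [set U | O U /\ U `<=` range iS].
Proof.
have [uR [uR_cont iRu]] := etale_unit_continuous etaleR.
have [iR_inj [[rR _ _] _] _ _ _] := etaleR.
move=> OS; apply: (groupoid_partition_restrict (phi := fun s => (uR (iS s).1, s))
  (psi := snd) part eS (fun p Sp => sub_gen_eqrel (or_intror Sp)) OS).
- move=> s; apply: cvg_pair => //.
  have src_cont : {for s, continuous (fun s => (iS s).1)} by exact: etale_src_continuous.
  exact: continuous_comp src_cont (uR_cont _).
- by move=> p; exact: cvg_snd.
- by move=> s; rewrite /fibprod /= iRu.
- by [].
- by move=> s; rewrite /fibmul /fr /fs /= iRu /= -surjective_pairing.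
- move=> [g s]; rewrite /fibprod /fibmul /fr /fs /= => gs Sxz; congr pair.
  have Rxy : range iR ((iR g).1, (iR g).2) by exists g => //; rewrite -surjective_pairing.
  have Syz : range iS ((iS s).1, (iS s).2) by exists s => //; rewrite -surjective_pairing.
  rewrite -gs in Syz.
  have yx := rcomp_mid_uniq eR eS RS Rxy Syz (rR _) Sxz.
  by apply: iR_inj; rewrite iRu [RHS]surjective_pairing -yx gs.
- exact: etale_src_continuous.
- exact: etale_tgt_continuous.
Qed.
End Transverse.

Unset Implicit Arguments.
Theorem lemma3p4 (X GR GS : topologicalType)
  (iR : GR -> X * X) (iS : GS -> X * X) :
  compact [set: X] -> metrizable X -> zero_dim X ->
  CEER iR -> CEER iS -> transverse iR iS ->
  (* (i) *)
  (forall x y : X, range iR (x, y) ->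
     (eqclass (range iS) x #= eqclass (range iS) y)%card) /\
  (* (ii) *)
  (forall O : set (set (X * X)),
     groupoid_partition (gen_eqrel (range iR `|` range iS))
       (fibmul iR iS) (fibprod iR iS) O ->
     (forall U, O U ->
        U `<=` diag X \/ U `<=` range iR `\` diag X \/
        U `<=` range iS `\` diag X \/
        U `<=` gen_eqrel (range iR `|` range iS) `\` (range iR `|` range iS)) ->
     (forall U, O U ->
        (exists UR US,
           [/\ O UR, O US, UR `<=` range iR, US `<=` range iS & U = rcomp UR US] /\
           forall UR' US',
             [/\ O UR', O US', UR' `<=` range iR, US' `<=` range iS &
                 U = rcomp UR' US'] -> UR' = UR /\ US' = US) /\
        (exists VS VR,
           [/\ O VS, O VR, VS `<=` range iS, VR `<=` range iR & U = rcomp VS VR] /\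
           forall VS' VR',
             [/\ O VS', O VR', VS' `<=` range iS, VR' `<=` range iR &
                 U = rcomp VS' VR'] -> VS' = VS /\ VR' = VR)) /\
     groupoid_partition (range iR) iR [set: GR] [set U | O U /\ U `<=` range iR] /\
     groupoid_partition (range iS) iS [set: GS] [set U | O U /\ U `<=` range iS]).
Proof.
move=> _ _ _ [etaleR _] [etaleS _] transRS.
have eR : eqrel_on (range iR) by case: etaleR => _ [].
have eS : eqrel_on (range iS) by case: etaleS => _ [].
have RS : range iR `&` range iS = diag X by case: transRS.
have RSC := transverse_rcompC transRS.
split.
  move=> x y Rxy; have [_ sR _] := eR.
  by apply: Cantor_Bernstein; apply: (eqclass_card_le eR eS RS); rewrite ?RSC //; apply: sR.
move=> O part finer; have [OR OS] := partition_respects_finer eR eS RS finer.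
split; last split.
- have SR_RS : rcomp (range iS) (range iR) `<=` rcomp (range iR) (range iS) by rewrite RSC.
  have RS_SR : rcomp (range iR) (range iS) `<=` rcomp (range iS) (range iR) by rewrite RSC.
  have partC := part; rewrite setUC in partC.
  move=> U OU; split.
  + exact: groupoid_partition_rcomp_factor eR eS RS SR_RS part OR OS U OU.
  + by apply: groupoid_partition_rcomp_factor eS eR _ RS_SR partC OS OR U OU; rewrite setIC.
- exact: groupoid_partition_restrictR etaleR etaleS RS part OR.
- exact: groupoid_partition_restrictS etaleR etaleS RS part OS.
Qed.
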